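(* Let $n\geq 1$ and $\lambda>0$. The following are equivalent: (1) for every $\lambda$-concave body $K\subset\mathbb{R}^{n+1}$ and every triple $0\leq i<j<k\leq n+1$ one has $(k-j)\lambda^{-i}W_i(K)+(i-k)\lambda^{-j}W_j(K)+(j-i)\lambda^{-k}W_k(K)\geq 0$, with equality if and only if $K$ is a $\lambda$-sausage body; (2) for every $\lambda$-concave body $K\subset\mathbb{R}^{n+1}$ and every integer $l$ with $0\leq l\leq n-1$ one has $\lambda^{-l}W_l(K)-2\lambda^{-(l+1)}W_{l+1}(K)+\lambda^{-(l+2)}W_{l+2}(K)\geq 0$, with equality if and only if $K$ is a $\lambda$-sausage body.
   Context: A convex body is a compact convex set with non-empty interior; balls are closed. For $\lambda>0$, a convex body $K\subset\mathbb{R}^{n+1}$ is $\lambda$-concave if for every $p\in\partial K$ there is a ball of radius $1/\lambda$ whose boundary passes through $p$ and which, intersected with some open neighborhood $U(p)$ of $p$, is contained in $K\cap U(p)$. A $\lambda$-sausage body is the convex hull of two (possibly coinciding) balls of radius $1/\lambda$. The quermassintegrals $W_i(K)$ are defined by the Steiner formula $\mathrm{Vol}_{n+1}(K+tB)=\sum_{i=0}^{n+1}\binom{n+1}{i}W_i(K)t^i$, $t\geq0$, with $B$ the unit ball and $+$ Minkowski addition. *)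

From HB Require Import structures.
From mathcomp Require Import all_boot all_order all_algebra.
From mathcomp Require Import all_classical all_reals all_analysis.
Set Implicit Arguments. Unset Strict Implicit. Unset Printing Implicit Defensive.
Import Order.TTheory GRing.Theory Num.Theory.
Import numFieldNormedType.Exports.
Local Open Scope classical_set_scope.
Local Open Scope ring_scope.

Section Defs.
Variable R : realType.
Variable m : nat.
(* Points of R^m are row vectors 'rV[R]_m (product topology = Euclidean topology). *)
Notation V := 'rV[R]_m.

Definition enorm (x : V) : R := Num.sqrt (\sum_(i < m) (x ord0 i) ^+ 2).

Definition eball (c : V) (r : R) : set V := [set x | enorm (x - c) <= r].

Definition convex_set (A : set V) : Prop :=
  forall x y, A x -> A y -> forall t : R, 0 <= t <= 1 -> A ((1 - t) *: x + t *: y).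

Definition convex_body (K : set V) : Prop :=
  compact K /\ convex_set K /\ (interior K) !=set0.

Definition boundary (K : set V) : set V := closure K `\` interior K.

Definition conv_hull (A : set V) : set V :=
  \bigcap_(C in [set C : set V | convex_set C /\ A `<=` C]) C.

Definition minkowski_sum (A B : set V) : set V := [set a + b | a in A & b in B].

Definition scale_set (t : R) (A : set V) : set V := [set t *: a | a in A].

Definition lambda_concave (lam : R) (K : set V) : Prop :=
  convex_body K /\
  forall p, boundary K p ->
    exists c : V, enorm (p - c) = lam^-1 /\
      exists U : set V, open U /\ U p /\ eball c lam^-1 `&` U `<=` K `&` U.

Definition lambda_sausage (lam : R) (K : set V) : Prop :=
  exists c1 c2 : V, K = conv_hull (eball c1 lam^-1 `|` eball c2 lam^-1).

Definition box (a b : V) : set V := [set x | forall i, a ord0 i <= x ord0 i <= b ord0 i].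
Definition box_vol (a b : V) : R := \prod_(i < m) (b ord0 i - a ord0 i).

(* (m-dimensional) Lebesgue outer measure: infimum over countable box covers *)
Definition vol (A : set V) : \bar R :=
  ereal_inf [set (\sum_(0 <= k <oo) (box_vol (ab.1 k) (ab.2 k))%:E)%E
            | ab in [set ab : (nat -> V) * (nat -> V) |
                       (forall k i, ab.1 k ord0 i <= ab.2 k ord0 i) /\
                       A `<=` \bigcup_k box (ab.1 k) (ab.2 k)]].
(* Steiner formula: W are the quermassintegrals of K, i.e.
   Vol_m(K + tB) = sum_{i=0}^{m} binom(m,i) W_i t^i for all t >= 0 *)
Definition steiner_coeffs (K : set V) (W : nat -> R) : Prop :=
  forall t : R, 0 <= t ->
    vol (minkowski_sum K (scale_set t (eball 0 1))) =
    (\sum_(i < m.+1) ('C(m, i))%:R * W i * t ^+ i)%:E.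
End Defs.

(* Only the sequence a_m := lam^-m W_m enters: both conditions say that the
   second differences of a are nonnegative on [0, n-1] and vanish exactly for
   sausage bodies, so neither the geometry nor lam > 0 plays a role.  The
   first differences d of a are then nondecreasing, hence the three-point
   expression (j-i)(a_k - a_j) - (k-j)(a_j - a_i) is at least
   (j-i)(k-j)(d_j - d_(j-1)), a positive multiple of a second difference.
   When all second differences vanish, this bound applies to both a and -a. *)
From HB Require Import structures.
From mathcomp Require Import all_boot all_order all_algebra.
From mathcomp Require Import all_classical all_reals all_analysis.
Import Order.TTheory GRing.Theory Num.Theory.
Import numFieldNormedType.Exports.
Local Open Scope classical_set_scope.
Local Open Scope ring_scope.
From mathcomp Require Import ring zify.

Section SecondDifferences.
Context {R : numDomainType}.
Implicit Types (a : nat -> R) (P : Prop) (i j k l N : nat).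

Definition first_diff a l := a l.+1 - a l.
Definition second_diff a l := a l - 2 * a l.+1 + a l.+2.
Definition three_point a i j k :=
  (k%:Z - j%:Z)%:~R * a i + (i%:Z - k%:Z)%:~R * a j + (j%:Z - i%:Z)%:~R * a k.

Lemma second_diffE a l : second_diff a l = first_diff a l.+1 - first_diff a l.
Proof. by rewrite /second_diff /first_diff; ring. Qed.

Lemma second_diffN a l : second_diff (fun m => - a m) l = - second_diff a l.
Proof. by rewrite /second_diff; ring. Qed.

Lemma three_point_consecutive a l : three_point a l l.+1 l.+2 = second_diff a l.
Proof. by rewrite /three_point /second_diff !rmorphB /= -!natr1; ring. Qed.

Lemma three_pointN a i j k :
  three_point (fun m => - a m) i j k = - three_point a i j k.
Proof. by rewrite /three_point; ring. Qed.

Lemma three_pointE a i j k : (i <= j <= k)%N ->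
  three_point a i j k = (j - i)%:R * (a k - a j) - (k - j)%:R * (a j - a i).
Proof.
by move=> /andP[ij jk]; rewrite /three_point !rmorphB /= !natrB //; ring.
Qed.

Section ConvexSequence.
Variables (a : nat -> R) (N : nat).
Hypothesis second_diff_ge0 : forall l, (l <= N)%N -> 0 <= second_diff a l.

Lemma first_diff_le p q :
  (p <= q <= N.+1)%N -> first_diff a p <= first_diff a q.
Proof.
move=> /andP[pq qN].
apply: (@homo_leq_in _ [pred l | l <= N.+1]%N _ <=%R) => //.
- exact: le_trans.
- by move=> x y _ yN z /andP[_ zy]; rewrite !inE in yN *; lia.
- move=> l _; rewrite inE => lN.
  by rewrite -subr_ge0 -second_diffE second_diff_ge0.
- by rewrite inE; lia.
Qed.

Lemma first_diff_sum_ge j k : (j <= k <= N.+2)%N ->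
  (k - j)%:R * first_diff a j <= a k - a j.
Proof.
move=> /andP[jk kN]; rewrite -(telescope_sumr _ jk) mulr_natl -sumr_const_nat.
by apply: ler_sum_nat => l /andP[jl lk]; apply: first_diff_le; lia.
Qed.

Lemma first_diff_sum_le i j : (i < j <= N.+2)%N ->
  a j - a i <= (j - i)%:R * first_diff a j.-1.
Proof.
move=> /andP[ij jN]; rewrite -(telescope_sumr _ (ltnW ij)) mulr_natl.
rewrite -sumr_const_nat; apply: ler_sum_nat => l /andP[il lj].
by apply: first_diff_le; lia.
Qed.

Lemma three_point_ge_second_diff i j k :
    (i < j)%N -> (j < k)%N -> (k <= N.+2)%N ->
  (j - i)%:R * (k - j)%:R * second_diff a j.-1 <= three_point a i j k.
Proof.
move=> ij jk kN.
have ak_aj : (k - j)%:R * first_diff a j <= a k - a j.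
  by apply: first_diff_sum_ge; lia.
have aj_ai : a j - a i <= (j - i)%:R * first_diff a j.-1.
  by apply: first_diff_sum_le; lia.
rewrite three_pointE; last by lia.
rewrite second_diffE prednK; last by lia.
rewrite mulrBr lerB //; first by rewrite -mulrA ler_wpM2l.
by rewrite (mulrC (j - i)%:R) -mulrA ler_wpM2l.
Qed.

Lemma three_point_ge0 i j k : (i < j)%N -> (j < k)%N -> (k <= N.+2)%N ->
  0 <= three_point a i j k.
Proof.
move=> ij jk kN.
apply: (le_trans _ (three_point_ge_second_diff _ _ _ ij jk kN)).
by rewrite !mulr_ge0 // second_diff_ge0 //; lia.
Qed.

End ConvexSequence.

Lemma three_point_eq0 a N i j k :
    (forall l, (l <= N)%N -> second_diff a l = 0) ->
    (i < j)%N -> (j < k)%N -> (k <= N.+2)%N ->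
  three_point a i j k = 0.
Proof.
move=> sd0 ij jk kN; apply/eqP; rewrite eq_le -oppr_ge0 -three_pointN.
by apply/andP; split; apply: (three_point_ge0 _ N) => // l /sd0;
  rewrite ?second_diffN => ->; rewrite ?oppr0.
Qed.

Definition second_diff_ineq a N P :=
  forall l, (l <= N)%N -> 0 <= second_diff a l /\ (second_diff a l = 0 <-> P).

Definition three_point_ineq a N P :=
  forall i j k, (i < j)%N -> (j < k)%N -> (k <= N.+2)%N ->
    0 <= three_point a i j k /\ (three_point a i j k = 0 <-> P).

Lemma three_point_ineq_equiv a N P :
  three_point_ineq a N P <-> second_diff_ineq a N P.
Proof.
split=> [tp l lN | sd i j k ij jk kN].
  by rewrite -three_point_consecutive; apply: tp => //; lia.
have sd_ge0 l (lN : (l <= N)%N) := (sd l lN).1.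
have jN : (j.-1 <= N)%N by lia.
split; first exact: three_point_ge0 sd_ge0 _ _ _ ij jk kN.
split=> [tp0 | HP]; last first.
  by apply: three_point_eq0 ij jk kN => l lN; apply: (sd l lN).2.2.
apply/(sd _ jN).2/eqP; rewrite eq_le sd_ge0 // andbT.
have c_gt0 : 0 < (j - i)%:R * (k - j)%:R :> R.
  by rewrite mulr_gt0 // ltr0n subn_gt0.
rewrite -(pmulr_rle0 _ c_gt0) -tp0.
exact: three_point_ge_second_diff sd_ge0 _ _ _ ij jk kN.
Qed.

End SecondDifferences.

Theorem lemma3p1 (R : realType) (n : nat) (lam : R) :
  (1 <= n)%N -> 0 < lam ->
  ((forall (K : set 'rV[R]_(n.+1)) (W : nat -> R),
      lambda_concave lam K -> steiner_coeffs K W ->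
      forall i j k : nat, (i < j)%N -> (j < k)%N -> (k <= n.+1)%N ->
        let e := (k%:Z - j%:Z)%:~R * lam ^- i * W i
                 + (i%:Z - k%:Z)%:~R * lam ^- j * W j
                 + (j%:Z - i%:Z)%:~R * lam ^- k * W k in
        0 <= e /\ (e = 0 <-> lambda_sausage lam K))
   <->
   (forall (K : set 'rV[R]_(n.+1)) (W : nat -> R),
      lambda_concave lam K -> steiner_coeffs K W ->
      forall l : nat, (l <= n.-1)%N ->
        let e := lam ^- l * W l - 2 * (lam ^- l.+1 * W l.+1)
                 + lam ^- l.+2 * W l.+2 in
        0 <= e /\ (e = 0 <-> lambda_sausage lam K))).
Proof.
case: n => [//|n] _ _.
have equiv (K : set 'rV[R]_n.+2) (W : nat -> R) :=
  three_point_ineq_equiv (fun m => lam ^- m * W m) n (lambda_sausage lam K).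
split=> [tp K W Kconc KW | sd K W Kconc KW i j k ij jk kN].
  apply: (equiv K W).1 => i j k ij jk kN.
  by rewrite /three_point !mulrA; apply: tp.
rewrite -!mulrA.
by apply: (equiv K W).2 ij jk kN => l ln; apply: sd.
Qed.
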